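(* Let $E\ge0$ be an integer and let $\mathbf a=(a_1,\dots,a_m)$ be a partition. Then there exists a partition $\mathbf e=(e_1,\dots,e_{m-1})$ such that $\sum_{i=1}^{m-1}e_i=E$ and $\mathbf a\prec'\mathbf e$ if and only if $$E=\sum_{i=2}^m a_i\quad\text{or}\quad E\ge a_1+\sum_{i=3}^m a_i.$$
   Context: A partition is a nonincreasing finite sequence of nonnegative integers. 1-step generalized majorization: for nonincreasing integer sequences $\mathbf a=(a_1,\dots,a_m)$ and $\mathbf e=(e_1,\dots,e_{m-1})$, set $e_m=-\infty$ and $h=\min\{i: e_i<a_i\}$; then $\mathbf a\prec'\mathbf e$ means $e_i=a_{i+1}$ for all $h\le i\le m-1$. Empty sums are $0$. *)

From mathcomp Require Import all_boot.
Set Implicit Arguments. Unset Strict Implicit. Unset Printing Implicit Defensive.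

(* Sequences are 0-indexed: paper's a_i is [nth 0 a (i-1)].
   A partition is a nonincreasing [seq nat]: [sorted geq a]. *)

(* The index h (0-based) = min{ i : e_i < a_i }, with e_m = -oo, i.e. the
   last position (size a).-1 always qualifies. *)
Definition gm_h (a e : seq nat) : nat :=
  find (fun i => (i == (size a).-1) || (nth 0 e i < nth 0 a i))
       (iota 0 (size a)).

Definition gmaj1 (a e : seq nat) : Prop :=
  forall i, gm_h a e <= i -> i < (size a).-1 -> nth 0 e i = nth 0 a i.+1.

From mathcomp Require Import all_boot.

Set Implicit Arguments.
Unset Strict Implicit.
Unset Printing Implicit Defensive.

(* If h = 1 the majorization forces e = (a_2, ..., a_m).  Otherwise
   e_i >= a_i for i < h and e_i = a_{i+1} for i >= h; as a is nonincreasing,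
   e_1 >= a_1 and e_i >= a_{i+1} for every i >= 2, so E >= a_1 + a_3 + ... + a_m.
   Conversely (c, a_3, ..., a_m) is admissible whenever c = a_2 or c >= a_1. *)

Lemma leq_sumn_nth (s t : seq nat) : size s = size t ->
  (forall i, i < size s -> nth 0 s i <= nth 0 t i) -> sumn s <= sumn t.
Proof.
elim: s t => [|x s IHs] [|y t] //= [eq_st] le_st.
rewrite leq_add ?(le_st 0) //; apply: IHs => // i lt_is.
exact: (le_st i.+1).
Qed.

Lemma gm_h_le_last (a e : seq nat) : 0 < size a -> gm_h a e <= (size a).-1.
Proof.
move=> a_gt0; rewrite leqNgt; apply/negP => /(before_find 0).
by rewrite nth_iota ?prednK // eqxx.
Qed.

Lemma gm_h_before (a e : seq nat) i : i < gm_h a e -> nth 0 a i <= nth 0 e i.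
Proof.
case: (posnP (size a)) => [a0|a_gt0] lt_ih.
  by move: lt_ih; rewrite /gm_h a0.
have lt_i_last : i < (size a).-1 := leq_trans lt_ih (gm_h_le_last e a_gt0).
move: (before_find 0 lt_ih).
rewrite nth_iota; last by rewrite (leq_trans lt_i_last) ?leq_pred.
by rewrite add0n ltn_eqF //= => /negbT; rewrite -leqNgt.
Qed.

Lemma gmaj1_h0 (a e : seq nat) :
  size e = (size a).-1 -> gm_h a e = 0 -> gmaj1 a e -> e = behead a.
Proof.
move=> size_e h0 maj; apply: (eq_from_nth (x0 := 0)); first by rewrite size_behead.
by move=> i; rewrite size_e nth_behead => lt_i; apply: maj; rewrite ?h0.
Qed.

Lemma gmaj1_lower_bound (x y : nat) (s e : seq nat) :
  sorted geq [:: x, y & s] -> 0 < gm_h [:: x, y & s] e ->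
  gmaj1 [:: x, y & s] e ->
  forall i, i < size (x :: s) -> nth 0 (x :: s) i <= nth 0 e i.
Proof.
move=> /(sortedP 0) sorted_a h_gt0 maj [_|i]; first exact: (gm_h_before h_gt0).
rewrite ltnS => lt_i.
case: (ltnP i.+1 (gm_h [:: x, y & s] e)) => [lt_ih|le_hi].
  by apply: leq_trans (gm_h_before lt_ih); apply: sorted_a; rewrite /= !ltnS.
by rewrite maj.
Qed.

Lemma gmaj1_cons (x y c : nat) (s : seq nat) :
  c = y \/ x <= c -> gmaj1 [:: x, y & s] (c :: s).
Proof.
move=> c_ok [|i] //= h0 _; case: c_ok => // le_xc.
by move: h0; rewrite /gm_h /= ltnNge le_xc.
Qed.

Lemma gmaj1_cons_witness (x y c : nat) (s : seq nat) :
  sorted geq [:: x, y & s] -> c = y \/ x <= c ->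
  [/\ size (c :: s) = (size [:: x, y & s]).-1, sorted geq (c :: s)
    & gmaj1 [:: x, y & s] (c :: s)].
Proof.
move=> /= /andP[le_yx path_ys] c_ok; split=> //=; last exact: gmaj1_cons.
apply: path_le path_ys; first by move=> p q r /[swap]; apply: leq_trans.
by case: c_ok => [->|le_xc]; [exact: leqnn | exact: leq_trans le_yx le_xc].
Qed.

Theorem lemma5p2 (E : nat) (a : seq nat) :
  2 <= size a -> sorted geq a ->
  (exists e : seq nat,
      [/\ size e = (size a).-1, sorted geq e, sumn e = E & gmaj1 a e])
  <->
  (E = sumn (behead a) \/ nth 0 a 0 + sumn (drop 2 a) <= E).
Proof.
case: a => [|x [|y s]] //= _ sorted_a; rewrite drop0; split.
- move=> [e [size_e _ <- maj]].
  have [h0|h_gt0] := posnP (gm_h [:: x, y & s] e).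
    by left; rewrite (gmaj1_h0 (a := [:: x, y & s]) size_e h0 maj).
  right; apply: (@leq_sumn_nth (x :: s)); first by rewrite size_e.
  exact: (gmaj1_lower_bound (y := y)).
- case=> [->|le_E]; [exists (y :: s) | exists ((E - sumn s) :: s)].
    by have [] := gmaj1_cons_witness sorted_a (or_introl erefl).
  have le_sE : sumn s <= E := leq_trans (leq_addl x _) le_E.
  have le_xc : x <= E - sumn s by rewrite leq_subRL // addnC.
  have [? ? ?] := gmaj1_cons_witness sorted_a (or_intror le_xc).
  by split=> //=; rewrite subnK.
Qed.
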